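(* Let $k\ge2$ and let $G=F_k$ be the free group of rank $k$, presented as $G=\langle S_{2k}\mid K\rangle$ with $S_{2k}=\{s_1,\dots,s_{2k}\}$ and $K(s_i,s_j)=0$ if and only if $|i-j|=k$. Let $\mathcal{A}$ be a finite alphabet, $A$ a $\{0,1\}$-matrix indexed by $\mathcal{A}$, and $X=X_{\mathbf{A},\mathbf{A}^t}$ the Markov tree shift on $F_k$ given by the $2k$-tuple $(A_1,\dots,A_k,A_1^t,\dots,A_k^t)$ with $A_1=\cdots=A_k=A$. Then the limit $\lim_{n\to\infty}\log p_n/|\Delta_n|$ exists and equals $h^{(s)}(X)$.
   Context: For a $\{0,1\}$-matrix $K$ indexed by generators $S=\{s_1,\dots,s_N\}$, $\langle S\mid K\rangle$ is the semigroup generated by $S$ with relations $s_is_j=1_G$ iff $K(s_i,s_j)=0$; here this is $F_k$ with $s_{i+k}=s_i^{-1}$. Every $g$ has a unique minimal (reduced) word $g=g_1\cdots g_n$, $|g|=n$. $\Delta_n=\{h\in G:|h|\le n\}$ and $\bar{\Delta}^{(g)}_n=\{gh:|h|\le n,\ |gh|=|g|+|h|\}$. A pattern $u:H\to\mathcal{A}$ ($H$ finite) is accepted by $t\in\mathcal{A}^G$ if there is $g$ with $t_{gh}=u_h$ for all $h\in H$; $p_n$ (resp. $p^{(g)}_n$) is the number of patterns on $\Delta_n$ (resp. $\bar{\Delta}^{(g)}_n$) accepted by some $t\in X$. For an $N$-tuple $(B_1,\dots,B_N)$ of $\{0,1\}$-matrices indexed by $\mathcal{A}$ the Markov tree shift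 is $\{t\in\mathcal{A}^G: B_i(t_g,t_{gs_i})=1 \text{ whenever } |gs_i|=|g|+1\}$. $A^t$ is the transpose. The $i$th stem entropy is $h^{(s_i)}(X)=\limsup_n\log p^{(s_i)}_n/|\bar{\Delta}^{(s_i)}_n|$; these coincide (as $K$ is primitive for $k\ge2$) and $h^{(s)}(X)$ is their common value. *)

From Stdlib Require Import ClassicalEpsilon.
From mathcomp Require Import all_boot.
Set Implicit Arguments. Unset Strict Implicit. Unset Printing Implicit Defensive.

(* Free group F_k presented by generators s_0, ..., s_{2k-1} (0-indexed),
   with s_{i+k} = s_i^{-1}, i.e. K(s_i,s_j) = 0 iff |i - j| = k. *)
Section FreeGroup.
Variable k : nat.
Notation gen := 'I_(2 * k).

Definition ginv (i : gen) : gen :=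
  Ordinal (ltn_pmod (i + k) (leq_ltn_trans (leq0n i) (ltn_ord i))).

(* words over the generators; group elements are the reduced words *)
Definition word := seq gen.

Definition reduced (w : word) : bool := sorted (fun a b => b != ginv a) w.

Definition rpush (w : word) (a : gen) : word :=
  if rev w is b :: r then (if a == ginv b then rev r else rcons w a)
  else [:: a].

Definition gmul (g h : word) : word := foldl rpush g h.

Fixpoint words (j : nat) : seq word :=
  if j is j'.+1 then [seq rcons w a | w <- words j', a <- enum gen]
  else [:: [::]].

Definition delta (n : nat) : seq word :=
  [seq w <- flatten [seq words j | j <- iota 0 n.+1] | reduced w].

Definition stemset (i : gen) (n : nat) : seq word :=
  [seq i :: h | h <- delta n & reduced (i :: h)].

(* Markov tree shift X_{A,A^t} on F_k: tuple (A_1..A_k, A_1^t..A_k^t), A_i = A.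
   B_i(t_g, t_{g s_i}) = 1 whenever |g s_i| = |g| + 1. *)
Definition markovB (A : finType) (Am : rel A) (i : gen) : rel A :=
  if i < k then Am else (fun a b => Am b a).

Definition inX (A : finType) (Am : rel A) (t : word -> A) : Prop :=
  forall (g : word) (i : gen), reduced g -> reduced (rcons g i) ->
    markovB Am i (t g) (t (rcons g i)).

Definition pbool (P : Prop) : bool :=
  if excluded_middle_informative P then true else false.

Definition npat (A : finType) (Am : rel A) (H : seq word) : nat :=
  #|[set u : (size H).-tuple A | pbool (exists t : word -> A, inX Am t /\
        exists g : word, reduced g /\ tval u = [seq t (gmul g h) | h <- H])]|.

Definition p_n (A : finType) (Am : rel A) (n : nat) : nat := npat Am (delta n).
Definition p_stem (A : finType) (Am : rel A) (i : gen) (n : nat) : nat :=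
  npat Am (stemset i n).

End FreeGroup.

From Stdlib Require Import Reals.
From Coquelicot Require Import Coquelicot.
From mathcomp Require Import all_boot.
From mathcomp Require Import fingroup perm.
From Stdlib Require Import Lra Lia ClassicalEpsilon.
From mathcomp Require Import zify.

(* Let a_n and b_n count the stem patterns of depth n at a generator s_i with i < k, resp. i >= k
   (automorphisms of F_k preserving X permute the stems at generators of the same sign), and P_n
   the patterns on Delta_n.  Splitting a stem or a ball at its root into subtrees gives
     a_{n+1} b_n <= |A| a_n^k b_n^k,   b_{n+1} a_n <= |A| a_n^k b_n^k,   P_{n+1} <= |A| a_n^k b_n^k,
   and grafting two stems with a common, suitably chosen, root symbol into a ball gives
     (a_{n+1} b_n)^2 <= |A|^2 P_{n+1} a_n^k b_n^k,
   which needs a second generator of the sign of s_i^{-1}, i.e. k >= 2.  In logarithms these are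
   linear recursions driven by 2k - 1, the growth rate of both |Delta_n| and the stems: they force
   log a_n / (2k-1)^n and log b_n / (2k-1)^n to a common limit tau/2 and log P_n / (2k-1)^n to
   k tau / (2k-1), and after normalisation by the sizes both entropy quotients have the same
   limit. *)

Set Implicit Arguments. Unset Strict Implicit. Unset Printing Implicit Defensive.

Section Combinatorics.
Local Open Scope nat_scope.

Lemma pboolP (P : Prop) : pbool P = true <-> P.
Proof. by rewrite /pbool; case: excluded_middle_informative. Qed.

Lemma sumn_if (T : Type) (P : pred T) c (s : seq T) :
  sumn [seq (if P w then c else 0) | w <- s] = c * count P s.
Proof. by elim: s => [|w s IHs] /=; [rewrite muln0 | rewrite IHs; case: (P w) => /=; lia]. Qed.

Lemma iota0S n : iota 0 n.+1 = iota 0 n ++ [:: n].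
Proof. by rewrite -addn1 iotaD. Qed.

Section TupleCount.
Variable A : finType.

Definition ntuples n (P : seq A -> Prop) : nat :=
  #|[set u : n.-tuple A | pbool (P u)]|.

Lemma in_ntuples n (P : seq A -> Prop) (u : n.-tuple A) :
  u \in [set u : n.-tuple A | pbool (P u)] <-> P u.
Proof. by rewrite inE; apply: pboolP. Qed.

Lemma eq_ntuples n (P1 P2 : seq A -> Prop) :
  (forall u, size u = n -> P1 u <-> P2 u) -> ntuples n P1 = ntuples n P2.
Proof.
move=> P12; apply: eq_card => u; rewrite !inE.
by apply/idP/idP => /pboolP Pu; apply/pboolP; apply/(P12 u (size_tuple u)).
Qed.

Lemma ntuples_gt0 n (P : seq A -> Prop) u : size u = n -> P u -> 0 < ntuples n P.
Proof.
move=> /eqP su Pu; apply/card_gt0P; exists (Tuple su); exact/in_ntuples.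
Qed.

Lemma ntuples0 (P : seq A -> Prop) : ntuples 0 P <= 1.
Proof. by apply: leq_trans (max_card _) _; rewrite card_tuple. Qed.

Lemma ntuples_inj n1 n2 (P1 P2 : seq A -> Prop) (f : seq A -> seq A) :
  (forall u, size u = n1 -> P1 u -> size (f u) = n2 /\ P2 (f u)) ->
  (forall u v, size u = n1 -> size v = n1 -> P1 u -> P1 v -> f u = f v -> u = v) ->
  ntuples n1 P1 <= ntuples n2 P2.
Proof.
move=> fP f_inj; rewrite /ntuples; set S1 := [set u : n1.-tuple A | _].
have [->|[u0 /in_ntuples P1u0]] := set_0Vmem S1; first by rewrite cards0.
have [/eqP su0 _] := fP u0 (size_tuple u0) P1u0.
pose g (x : n1.-tuple A) : n2.-tuple A := insubd (Tuple su0) (f x).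
have gE x : x \in S1 -> val (g x) = f x.
  move=> /in_ntuples P1x; rewrite val_insubd.
  by have [-> _] := fP x (size_tuple x) P1x; rewrite eqxx.
rewrite -(card_in_imset (f := g)); last first.
  move=> x y Sx Sy gxy; apply/val_inj/f_inj; rewrite ?size_tuple //.
  - exact/in_ntuples.
  - exact/in_ntuples.
  by rewrite -gE // -(gE y) // gxy.
apply/subset_leq_card/subsetP => _ /imsetP [x Sx ->].
apply/in_ntuples; rewrite gE //.
by move/in_ntuples: Sx => /(fP x (size_tuple x)) [].
Qed.

Lemma ntuples_surj n1 n2 (P1 P2 : seq A -> Prop) (f : seq A -> seq A) :
  (forall v, size v = n2 -> P2 v -> exists u, [/\ size u = n1, P1 u & f u = v]) ->
  ntuples n2 P2 <= ntuples n1 P1.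
Proof.
move=> f_onto; rewrite /ntuples; set S2 := [set u : n2.-tuple A | _].
have [->|[v0 _]] := set_0Vmem S2; first by rewrite cards0.
apply: leq_trans (leq_imset_card (fun x : n1.-tuple A => insubd v0 (f x)) _).
apply/subset_leq_card/subsetP => v /in_ntuples P2v.
have [u [/eqP su P1u fu]] := f_onto v (size_tuple v) P2v.
apply/imsetP; exists (Tuple su); first exact/in_ntuples.
by apply: val_inj; rewrite val_insubd /= fu size_tuple eqxx.
Qed.

Lemma ntuples_cat_le n1 n2 (P P1 P2 : seq A -> Prop) :
  (forall u, size u = n1 + n2 -> P u -> P1 (take n1 u) /\ P2 (drop n1 u)) ->
  ntuples (n1 + n2) P <= ntuples n1 P1 * ntuples n2 P2.
Proof.
move=> Psplit; rewrite /ntuples -cardsX.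
apply: leq_trans (leq_imset_card (fun x => cat_tuple x.1 x.2) _).
apply/subset_leq_card/subsetP => u /in_ntuples Pu.
have [P1u P2u] := Psplit u (size_tuple u) Pu.
have s1 : size (take n1 u) == n1 by rewrite size_takel // size_tuple leq_addr.
have s2 : size (drop n1 u) == n2 by rewrite size_drop size_tuple addKn.
apply/imsetP; exists (Tuple s1, Tuple s2).
  by rewrite inE; apply/andP; split; apply/in_ntuples.
by apply: val_inj; rewrite /= cat_take_drop.
Qed.

Lemma ntuples_cat_ge n1 n2 (P P1 P2 : seq A -> Prop) :
  (forall x y, size x = n1 -> size y = n2 -> P1 x -> P2 y -> P (x ++ y)) ->
  ntuples n1 P1 * ntuples n2 P2 <= ntuples (n1 + n2) P.
Proof.
move=> Pcat; rewrite /ntuples -cardsX.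
rewrite -(card_in_imset (f := fun x => cat_tuple x.1 x.2)); last first.
  move=> [x1 x2] [y1 y2] _ _ /(congr1 val) /= /eqP.
  rewrite eqseq_cat ?size_tuple // => /andP [/eqP e1 /eqP e2].
  by congr pair; apply: val_inj.
apply/subset_leq_card/subsetP => _ /imsetP [[x y] + ->].
rewrite in_setX => /andP [/in_ntuples P1x /in_ntuples P2y].
by apply/in_ntuples/Pcat; rewrite ?size_tuple.
Qed.

Lemma ntuples_cons_le n (P : seq A -> Prop) (Pa : A -> seq A -> Prop) :
  (forall a u, size u = n -> P (a :: u) -> Pa a u) ->
  ntuples n.+1 P <= \sum_(a : A) ntuples n (Pa a).
Proof.
move=> Phead.
have -> : ntuples n.+1 P = \sum_(a : A) ntuples n.+1 (fun u => P u /\ head a u = a).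
  rewrite /ntuples -sum1_card (partition_big (fun u : n.+1.-tuple A => thead u) predT) //=.
  apply: eq_bigr => a _; rewrite -sum1_card; apply: eq_bigl => u.
  have headE : head a u = thead u.
    by case: u => [[|b s] su] //; rewrite /thead (tnth_nth b).
  have Pa_head := in_ntuples (fun u => P u /\ head a u = a) u.
  apply/andP/idP => [[/in_ntuples Pu /eqP ua]|/Pa_head [Pu ua]].
    by apply/Pa_head; rewrite headE.
  by split; [apply/in_ntuples | rewrite -headE ua].
apply: leq_sum => a _; apply: (ntuples_inj (f := behead)).
  by move=> [|b u] //= [su] [Pu <-]; split; last exact: Phead.
by move=> [|b u] [|c v] //= _ _ [_ <-] [_ <-] ->.
Qed.

End TupleCount.

Section FreeGroupWords.
Variable k : nat.
Notation gen := 'I_(2 * k).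
Notation word := (word k).

Lemma ginvE (i : gen) : val (ginv i) = if i < k then i + k else i - k.
Proof.
rewrite /ginv /=; have := ltn_ord i; case: (ltnP i k) => ik i2k.
  by rewrite modn_small //; lia.
have -> : i + k = (i - k) + 2 * k by lia.
by rewrite modnDr modn_small //; lia.
Qed.

Lemma ginvK : involutive (@ginv k).
Proof.
move=> i; apply: val_inj; rewrite !ginvE /=; have := ltn_ord i.
by case: (ltnP i k) => ik; case: ifP => ginv_ik; lia.
Qed.

Lemma ginv_lt (i : gen) : (ginv i < k) = ~~ (i < k).
Proof. by rewrite ginvE; have := ltn_ord i; case: (ltnP i k) => /=; lia. Qed.

Lemma markovB_ginv (A : finType) (Am : rel A) (i : gen) a b :
  markovB Am (ginv i) a b = markovB Am i b a.
Proof. by rewrite /markovB ginv_lt; case: (i < k). Qed.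

Lemma reduced_rcons2 (w : word) b a :
  reduced (rcons (rcons w b) a) = reduced (rcons w b) && (a != ginv b).
Proof. by case: w => [|c w] //=; rewrite ?andbT // rcons_path last_rcons. Qed.

Lemma reduced_rconsK (w : word) a : reduced (rcons w a) -> reduced w.
Proof. by case/lastP: w => [|w b] //; rewrite reduced_rcons2 => /andP []. Qed.

Lemma reduced_consK (w : word) a : reduced (a :: w) -> reduced w.
Proof. exact: path_sorted. Qed.

Lemma rpush_rcons (w : word) b a :
  rpush (rcons w b) a = if a == ginv b then w else rcons (rcons w b) a.
Proof. by rewrite /rpush rev_rcons revK. Qed.

Lemma reduced_rpush (w : word) a : reduced w -> reduced (rpush w a).
Proof.
case/lastP: w => [|w b] // wb_red; rewrite rpush_rcons.
case: eqP => [_|/eqP a_ne]; first exact: reduced_rconsK wb_red.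
by rewrite reduced_rcons2 wb_red a_ne.
Qed.

Lemma gmul_rcons (g h : word) a : gmul g (rcons h a) = rpush (gmul g h) a.
Proof. by rewrite /gmul foldl_rcons. Qed.

Lemma reduced_gmul (g h : word) : reduced g -> reduced (gmul g h).
Proof.
move=> g_red; elim/last_ind: h => [|h a IHh] //.
by rewrite gmul_rcons; apply: reduced_rpush.
Qed.

Lemma gmul_cat (g h : word) : reduced (g ++ h) -> gmul g h = g ++ h.
Proof.
elim/last_ind: h => [|h a IHh]; first by rewrite cats0.
rewrite -rcons_cat => gha_red; rewrite gmul_rcons IHh; last exact: reduced_rconsK gha_red.
move: gha_red; case/lastP: (g ++ h) => [|u b] //.
by rewrite reduced_rcons2 rpush_rcons => /andP [_ /negbTE ->].
Qed.

Lemma mem_words (w : word) j : (w \in words k j) = (size w == j).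
Proof.
elim: j w => [|j IHj] w; first by rewrite inE size_eq0.
apply/idP/idP.
  by case/allpairsP => [[x y]] /= [x_in _ ->]; rewrite size_rcons eqSS -IHj.
case/lastP: w => [|w a] //; rewrite size_rcons eqSS => /eqP sw.
by apply: allpairs_f; rewrite ?IHj ?mem_enum ?sw.
Qed.

Lemma mem_delta (w : word) n : (w \in delta k n) = reduced w && (size w <= n).
Proof.
rewrite /delta mem_filter; congr andb; apply/flatten_mapP/idP.
  by case=> j; rewrite mem_iota mem_words => /andP [_ jn] /eqP ->.
by move=> wn; exists (size w); rewrite ?mem_iota ?mem_words.
Qed.

Lemma mem_stemset (i : gen) (w : word) n :
  (w \in stemset i n) = if w is j :: h then [&& j == i, reduced w & size h <= n] else false.
Proof.
apply/mapP/idP.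
  by case=> h + ->; rewrite mem_filter mem_delta eqxx => /andP [-> /andP [_ ->]].
case: w => [|j h] //; case/and3P => /eqP -> ih_red hn; exists h => //.
by rewrite mem_filter mem_delta ih_red hn (reduced_consK ih_red).
Qed.

Lemma stemsetP (i : gen) (w : word) n :
  w \in stemset i n -> exists2 h, w = i :: h & reduced w.
Proof. by rewrite mem_stemset; case: w => [|j h] // /and3P [/eqP -> ? _]; exists h. Qed.

Lemma count_rcons_reduced (u : word) :
  count (fun a => reduced (rcons u a)) (enum gen) =
  if reduced u then (if u is [::] then 2 * k else 2 * k - 1) else 0.
Proof.
case/lastP: u => [|u b].
  by rewrite (eq_count (a2 := predT)) // count_predT size_enum_ord.
rewrite (eq_count (a2 := fun a => reduced (rcons u b) && (a != ginv b))); last first.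
  by move=> a; rewrite reduced_rcons2.
case: (reduced (rcons u b)); last by rewrite (eq_count (a2 := pred0)) // count_pred0.
rewrite (eq_count (a2 := predC (pred1 (ginv b)))) //.
have := count_predC (pred1 (ginv b)) (enum gen).
rewrite size_enum_ord (count_uniq_mem _ (enum_uniq _)) mem_enum.
by case: u => [|? ?] /=; lia.
Qed.

Definition nreduced (pre : word) j := count (fun h => reduced (pre ++ h)) (words k j).

Lemma nreducedS pre j : nreduced pre j.+1 =
  sumn [seq (if reduced (pre ++ w) then (if pre ++ w is [::] then 2 * k else 2 * k - 1) else 0)
       | w <- words k j].
Proof.
rewrite /nreduced /= count_flatten -map_comp; congr sumn; apply: eq_map => w /=.
by rewrite count_map -count_rcons_reduced; apply: eq_count => a; rewrite /= rcons_cat.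
Qed.

Lemma nreduced1 (i : gen) j : nreduced [:: i] j = (2 * k - 1) ^ j.
Proof.
elim: j => [|j IHj] //.
by rewrite nreducedS /= sumn_if -/(nreduced [:: i] j) IHj expnS.
Qed.

Lemma nreduced0 j : nreduced [::] j.+1 = 2 * k * (2 * k - 1) ^ j.
Proof.
elim: j => [|j IHj]; first by rewrite nreducedS /= muln1 addn0.
rewrite nreducedS (_ : map _ _ = map (fun w => if reduced w then 2 * k - 1 else 0) (words k j.+1)).
  by rewrite sumn_if -/(nreduced [::] j.+1) IHj expnS; lia.
by apply/eq_in_map => -[|a w] // /allpairsP [[[|? ?] ?] /= [_ _]].
Qed.

Lemma size_delta_sum n : size (delta k n) = sumn [seq nreduced [::] j | j <- iota 0 n.+1].
Proof. by rewrite /delta size_filter count_flatten -map_comp. Qed.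

Lemma size_stemset_sum (i : gen) n :
  size (stemset i n) = sumn [seq nreduced [:: i] j | j <- iota 0 n.+1].
Proof.
rewrite /stemset size_map size_filter /delta count_filter count_flatten -map_comp.
congr sumn; apply: eq_map => j /=; apply: eq_count => h /=.
by case: (boolP (path _ i h)) => // /path_sorted; rewrite /reduced => ->.
Qed.

Lemma prod_gen_sign (x y : nat) :
  \prod_(l <- enum gen) (if l < k then x else y) = x ^ k * y ^ k.
Proof.
rewrite -(big_map val xpredT (fun i : nat => if i < k then x else y)) val_enum_ord.
have -> : iota 0 (2 * k) = index_iota 0 (2 * k) by rewrite /index_iota subn0.
rewrite (big_cat_nat (n := k)) //=; last by lia.
have const (m1 m2 : nat) z F : (forall i, m1 <= i < m2 -> F i = z) ->
    \prod_(m1 <= i < m2) F i = z ^ (m2 - m1).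
  move=> Fz; rewrite big_nat_cond (eq_bigr (fun _ => z)) -?big_nat_cond ?prod_nat_const_nat //.
  by move=> i /andP [/Fz].
rewrite (const _ _ x) ?(const _ _ y) => [|i /andP [ki _]|i /andP [_ ->]] //.
  by congr (_ ^ _ * _ ^ _); lia.
by rewrite ltnNge ki.
Qed.

Lemma size_stemset (i : gen) n :
  (2 * k - 2) * size (stemset i n) + 1 = (2 * k - 1) ^ n.+1.
Proof.
have kpos : 0 < k by have := ltn_ord i; lia.
rewrite size_stemset_sum; elim: n => [|n IHn]; first by rewrite /= nreduced1; lia.
rewrite iota0S map_cat sumn_cat [sumn [:: _]]/= addn0 nreduced1 [_ ^ n.+2]expnS -IHn.
have -> : 2 * k - 1 = (2 * k - 2).+1 by lia.
by set a := 2 * k - 2; nia.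
Qed.

Lemma size_delta n : 0 < k ->
  (2 * k - 2) * size (delta k n) + 2 * k = (2 * k - 2) + 2 * k * (2 * k - 1) ^ n.
Proof.
move=> kpos; rewrite size_delta_sum; elim: n => [|n IHn]; first by rewrite /= /nreduced /=; lia.
rewrite iota0S map_cat sumn_cat [sumn [:: _]]/= addn0 nreduced0 expnS.
move: IHn; have -> : 2 * k - 1 = (2 * k - 2).+1 by lia.
by set a := 2 * k - 2; set X := a.+1 ^ n; set s := sumn _; nia.
Qed.

End FreeGroupWords.

Section Patterns.
Variable k : nat.
Notation gen := 'I_(2 * k).
Notation word := (word k).
Variable A : finType.

Definition npat_in (Y : (word -> A) -> Prop) (H : seq word) : nat :=
  ntuples (size H) (fun u => exists2 t, Y t & u = map t H).

Lemma npat_in_eq0 Y H : (forall t, ~ Y t) -> npat_in Y H = 0.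
Proof.
move=> Y0; apply/eqP; rewrite cards_eq0; apply/eqP/setP => u; rewrite !inE.
by apply/negbTE/negP => /pboolP [t /Y0].
Qed.

Lemma npat_in_gt0 Y H t : Y t -> 0 < npat_in Y H.
Proof. by move=> Yt; apply: (@ntuples_gt0 _ _ _ (map t H)); rewrite ?size_map //; exists t. Qed.

Lemma npat_in_transfer (Y1 Y2 : (word -> A) -> Prop) (F : (word -> A) -> (word -> A))
    (H1 H2 : seq word) :
  (forall t, Y1 t -> Y2 (F t)) ->
  (forall h, h \in H1 -> exists2 h', h' \in H2 & forall t, Y1 t -> t h = F t h') ->
  npat_in Y1 H1 <= npat_in Y2 H2.
Proof.
move=> YF HF.
have [[t0 Yt0]|Y1_0] := excluded_middle_informative (exists t, Y1 t); last first.
  by rewrite npat_in_eq0 // => t Yt; apply: Y1_0; exists t.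
have rho_ex h : exists h', h \in H1 -> h' \in H2 /\ forall t, Y1 t -> t h = F t h'.
  have [/HF [h' ? ?]|] := boolP (h \in H1); [by exists h' | by exists h].
pose rho h := proj1_sig (constructive_indefinite_description _ (rho_ex h)).
have rhoP h : h \in H1 -> rho h \in H2 /\ forall t, Y1 t -> t h = F t (rho h).
  exact: proj2_sig (constructive_indefinite_description _ (rho_ex h)).
apply: (ntuples_surj (f := fun v => map (fun h => nth (t0 [::]) v (index (rho h) H2)) H1)).
move=> _ _ [t Yt ->]; exists (map (F t) H2); split; rewrite ?size_map //.
  by exists (F t) => //; apply: YF.
apply/eq_in_map => h /rhoP [rho_in tF].
by rewrite (nth_map (rho h)) ?index_mem // nth_index // -tF.
Qed.

Lemma npat_in_mono (Y1 Y2 : (word -> A) -> Prop) H1 H2 :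
  (forall t, Y1 t -> Y2 t) -> {subset H1 <= H2} -> npat_in Y1 H1 <= npat_in Y2 H2.
Proof. by move=> Y12 H12; apply: (npat_in_transfer (F := id)) => // h /H12; exists h. Qed.

Lemma npat_in_cat Y H1 H2 : npat_in Y (H1 ++ H2) <= npat_in Y H1 * npat_in Y H2.
Proof.
rewrite /npat_in size_cat; apply: ntuples_cat_le => _ _ [t Yt ->].
by rewrite map_cat take_size_cat ?drop_size_cat ?size_map //; split; exists t.
Qed.

Lemma npat_in_flatten (I : Type) Y (f : I -> seq word) (L : seq I) :
  npat_in Y (flatten (map f L)) <= \prod_(l <- L) npat_in Y (f l).
Proof.
elim: L => [|l L IHL]; first by rewrite big_nil; apply: ntuples0.
by rewrite big_cons; apply: leq_trans (npat_in_cat _ _ _) (leq_mul _ IHL).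
Qed.

Lemma npat_in_cons Y w H :
  npat_in Y (w :: H) <= \sum_(a : A) npat_in (fun t => Y t /\ t w = a) H.
Proof.
by apply: ntuples_cons_le => a u _ [t Yt [-> ->]]; exists t.
Qed.

Lemma npat_in_cat_ge Y H1 H2 :
  (forall t1 t2, Y t1 -> Y t2 ->
     exists2 t, Y t & map t H1 = map t1 H1 /\ map t H2 = map t2 H2) ->
  npat_in Y H1 * npat_in Y H2 <= npat_in Y (H1 ++ H2).
Proof.
move=> Yglue; rewrite /npat_in size_cat.
apply: ntuples_cat_ge => _ _ _ _ [t1 Y1 ->] [t2 Y2 ->].
by have [t Yt [e1 e2]] := Yglue t1 t2 Y1 Y2; exists t; rewrite // map_cat e1 e2.
Qed.

Variable Am : rel A.
Notation X := (inX Am).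

Lemma inX_translate (g : word) t : reduced g -> X t -> X (fun w => t (gmul g w)).
Proof.
move=> g_red Xt w i _ _ /=; rewrite gmul_rcons.
have := reduced_gmul w g_red; case/lastP: (gmul g w) => [|v b] vb_red.
  exact: (Xt [::] i).
rewrite rpush_rcons; case: eqP => [->|/eqP i_ne].
  by rewrite markovB_ginv; apply: (Xt v b (reduced_rconsK vb_red) vb_red).
by apply: Xt => //; rewrite reduced_rcons2 vb_red i_ne.
Qed.

(* translating a point of [X] keeps it in [X], so the base point [g] can be taken to be [1] *)
Lemma npatE (H : seq word) : all (@reduced k) H -> npat Am H = npat_in X H.
Proof.
move=> H_red; change (ntuples (size H) (fun u => exists t, X t /\
  exists g : word, reduced g /\ u = [seq t (gmul g h) | h <- H]) = npat_in X H).
apply: eq_ntuples => u _; split.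
  case=> t [Xt [g [g_red ->]]]; exists (fun w => t (gmul g w)) => //.
  exact: inX_translate.
case=> t Xt ->; exists t; split => //; exists [::]; split => //.
by apply/eq_in_map => h /(allP H_red) h_red; rewrite (@gmul_cat _ [::]).
Qed.

Lemma reduced_map (s : gen -> gen) (w : word) :
  injective s -> {morph s : i / ginv i} -> reduced (map s w) = reduced w.
Proof.
move=> s_inj s_ginv; rewrite /reduced sorted_map; apply: eq_sorted => a b /=.
by rewrite -s_ginv (inj_eq s_inj).
Qed.

Lemma inX_map (s : gen -> gen) t :
  injective s -> {morph s : i / ginv i} -> (forall i, (s i < k) = (i < k)) ->
  X t -> X (fun w => t (map s w)).
Proof.
move=> s_inj s_ginv s_lt Xt w i w_red wi_red /=; rewrite map_rcons.
have -> : markovB Am i = markovB Am (s i) by rewrite /markovB s_lt.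
by apply: Xt; rewrite -?map_rcons reduced_map.
Qed.

Definition graft (l : gen) (t1 t2 : word -> A) (w : word) : A :=
  if w is a :: _ then (if a == l then t1 w else t2 w) else t1 w.

Lemma inX_graft l t1 t2 : X t1 -> X t2 -> t1 [::] = t2 [::] -> X (graft l t1 t2).
Proof.
move=> X1 X2 e12 [|a w] i w_red wi_red /=.
  by case: (i == l); [apply: (X1 [::] i) | rewrite e12; apply: (X2 [::] i)].
by case: (a == l); [apply: (X1 (a :: w)) | apply: (X2 (a :: w))].
Qed.

End Patterns.

Section StemRecursions.
Variable k : nat.
Notation gen := 'I_(2 * k).
Notation word := (word k).
Variables (A : finType) (Am : rel A).
Notation X := (inX Am).

Definition inX_at (c : A) (t : word -> A) := X t /\ t [::] = c.

Definition q_stem (j : gen) n c := npat_in (inX_at c) (stemset j n).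

Lemma p_stemE (j : gen) n : p_stem Am j n = npat_in X (stemset j n).
Proof. by apply: npatE => //; apply/allP => w /stemsetP []. Qed.

Lemma p_nE n : p_n k Am n = npat_in X (delta k n).
Proof. by apply: npatE => //; apply/allP => w; rewrite mem_delta => /andP []. Qed.

Lemma p_stem_eq0 (j : gen) n : (forall t : word -> A, ~ X t) -> p_stem Am j n = 0.
Proof. by move=> X0; rewrite p_stemE npat_in_eq0. Qed.

Lemma p_n_eq0 n : (forall t : word -> A, ~ X t) -> p_n k Am n = 0.
Proof. by move=> X0; rewrite p_nE npat_in_eq0. Qed.

Lemma q_stem_le (j : gen) n c : q_stem j n c <= p_stem Am j n.
Proof. by rewrite p_stemE; apply: npat_in_mono => [t []|]. Qed.

Lemma p_stem_succ_le_sum (j : gen) n :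
  p_stem Am j n.+1 <= \sum_(a : A) \prod_(l <- enum gen | l != ginv j) q_stem l n a.
Proof.
pose L := [seq l <- enum gen | l != ginv j].
rewrite p_stemE; apply: leq_trans
  (npat_in_mono (Y2 := X)
     (H2 := [:: j] :: flatten [seq map (cons j) (stemset l n) | l <- L]) _ _) _.
- by [].
- move=> w; rewrite mem_stemset; case: w => [|a [|l h]] //; case/and3P => /eqP -> + hn.
    by rewrite mem_head.
  move=> /andP [l_ne lh_red]; rewrite inE; apply/orP; right.
  apply/flatten_mapP; exists l; first by rewrite mem_filter mem_enum andbT.
  by apply: map_f; rewrite mem_stemset eqxx; apply/and3P.
apply: leq_trans (npat_in_cons _ _ _) _; apply: leq_sum => a _.
apply: leq_trans (npat_in_flatten _ _ _) _.
rewrite /L big_filter big_seq_cond [X in _ <= X]big_seq_cond.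
apply: leq_prod => l /andP [_ l_ne].
apply: (npat_in_transfer (F := fun t w => t (gmul [:: j] w))).
  by move=> t [Xt <-]; split; [apply: inX_translate | ].
move=> _ /mapP [w w_in ->]; exists w => // t _.
have [h -> lh_red] := stemsetP w_in.
by rewrite (@gmul_cat _ [:: j]) //= l_ne.
Qed.

Lemma p_n_succ_le_sum n : p_n k Am n.+1 <= \sum_(c : A) \prod_(l <- enum gen) q_stem l n c.
Proof.
rewrite p_nE; apply: leq_trans
  (npat_in_mono (Y2 := X) (H2 := [::] :: flatten [seq stemset l n | l <- enum gen]) _ _) _.
- by [].
- move=> [|l w]; rewrite ?mem_head // mem_delta => /andP [lw_red lw_n].
  rewrite inE; apply/orP; right; apply/flatten_mapP; exists l; first by rewrite mem_enum.
  by rewrite mem_stemset eqxx lw_red.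
apply: leq_trans (npat_in_cons _ _ _) _; apply: leq_sum => c _.
exact: npat_in_flatten.
Qed.

(* stems at distinct generators are disjoint subtrees, so patterns with a common root glue *)
Lemma prod_q_stem_le_graft n c (L : seq gen) t0 : inX_at c t0 -> uniq L ->
  \prod_(l <- L) q_stem l n c <= npat_in (inX_at c) (flatten [seq stemset l n | l <- L]).
Proof.
move=> Xt0; elim: L => [|l L IHL]; first by rewrite big_nil => _; apply: npat_in_gt0 Xt0.
rewrite cons_uniq big_cons => /andP [lL L_uniq].
apply: leq_trans (leq_mul (leqnn _) (IHL L_uniq)) (npat_in_cat_ge _) => t1 t2 [X1 e1] [X2 e2].
exists (graft l t1 t2); first by split; [apply: inX_graft; rewrite ?e1 ?e2 | ].
split; apply/eq_in_map => w.
  by move=> /stemsetP [h -> _] /=; rewrite eqxx.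
case/flatten_mapP => l' l'L /stemsetP [h -> _] /=.
by rewrite ifN //; apply: contraNneq lL => <-.
Qed.

Lemma prod_q_stem_le n c : 0 < k -> \prod_(l <- enum gen) q_stem l n c <= p_n k Am n.+1.
Proof.
move=> kpos.
have [[t0 Xt0]|X0] := excluded_middle_informative (exists t, inX_at c t).
  apply: leq_trans (prod_q_stem_le_graft n Xt0 (enum_uniq _)) _; rewrite p_nE.
  apply: npat_in_mono => [t []//|w /flatten_mapP [l _]].
  rewrite mem_stemset mem_delta; case: w => [|a h] // /and3P [_ -> /=].
  exact: leq_trans.
have gen0 : 0 < 2 * k by rewrite muln_gt0.
rewrite (bigD1_seq (Ordinal gen0)) ?mem_enum ?enum_uniq //=.
by rewrite {1}/q_stem npat_in_eq0 // => t Xt; apply: X0; exists t.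
Qed.

Section GenSwap.
Variables l1 l2 : gen.
Hypothesis same_sign : (l1 < k) = (l2 < k).

(* acting letterwise, an automorphism of F_k preserving [X] and mapping the stem at [l1] onto the
   stem at [l2] *)
Definition gen_swap (x : gen) : gen :=
  if (x < k) == (l1 < k) then tperm l1 l2 x else ginv (tperm l1 l2 (ginv x)).

Lemma tperm_lt x : (tperm l1 l2 x < k) = (x < k).
Proof. by case: tpermP => [->|->|]; rewrite ?same_sign. Qed.

Lemma gen_swap_lt x : (gen_swap x < k) = (x < k).
Proof.
rewrite /gen_swap; case: ifP => _; first exact: tperm_lt.
by rewrite ginv_lt (tperm_lt (ginv x)) ginv_lt negbK.
Qed.

Lemma gen_swapK : involutive gen_swap.
Proof.
move=> x; rewrite {2}/gen_swap; case: ifP => sx.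
  by rewrite /gen_swap (tperm_lt x) sx tpermK.
by rewrite /gen_swap ginv_lt (tperm_lt (ginv x)) ginv_lt negbK sx ginvK tpermK ginvK.
Qed.

Lemma gen_swap_ginv : {morph gen_swap : x / ginv x}.
Proof.
by move=> x; rewrite /gen_swap ginv_lt ginvK; case: (x < k); case: (l1 < k); rewrite //= ginvK.
Qed.

Lemma gen_swapL : gen_swap l1 = l2.
Proof. by rewrite /gen_swap eqxx tpermL. Qed.

Lemma npat_in_stemset_swap (Y : (word -> A) -> Prop) n :
  (forall t, Y t -> Y (fun w => t (map gen_swap w))) ->
  npat_in Y (stemset l1 n) <= npat_in Y (stemset l2 n).
Proof.
move=> Y_swap; apply: (npat_in_transfer (F := fun t w => t (map gen_swap w))) => // w w_in.
exists (map gen_swap w); last by move=> t _; rewrite (mapK gen_swapK).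
move: w_in; rewrite mem_stemset; case: w => [|a h] // /and3P [/eqP -> lh_red hn].
rewrite mem_stemset [map _ _]/= gen_swapL eqxx size_map hn andbT.
rewrite -gen_swapL -map_cons reduced_map //.
- exact: inv_inj gen_swapK.
- exact: gen_swap_ginv.
Qed.

Lemma inX_swap t : X t -> X (fun w => t (map gen_swap w)).
Proof. apply: inX_map; [exact: inv_inj gen_swapK | exact: gen_swap_ginv | exact: gen_swap_lt]. Qed.

End GenSwap.

Lemma q_stem_sym n c (l1 l2 : gen) : (l1 < k) = (l2 < k) -> q_stem l1 n c <= q_stem l2 n c.
Proof.
by move=> same; apply: (npat_in_stemset_swap same) => t [Xt tc]; split; [apply: inX_swap |].
Qed.

Lemma p_stem_sym n (l1 l2 : gen) : (l1 < k) = (l2 < k) -> p_stem Am l1 n = p_stem Am l2 n.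
Proof.
move=> same; rewrite !p_stemE; apply/eqP; rewrite eqn_leq.
by rewrite !npat_in_stemset_swap // => t; apply: inX_swap.
Qed.

Lemma sum_le_card_mul (F : A -> nat) c : (forall a, F a <= c) -> \sum_(a : A) F a <= #|A| * c.
Proof. by move=> F_le; rewrite -sum_nat_const; apply: leq_sum => a _. Qed.

Lemma p_stem_succ_le (j : gen) n :
  p_stem Am j n.+1 * p_stem Am (ginv j) n <= #|A| * \prod_(l <- enum gen) p_stem Am l n.
Proof.
rewrite (bigD1_seq (ginv j)) ?mem_enum ?enum_uniq //= mulnCA mulnC leq_mul2l; apply/orP; right.
apply: leq_trans (p_stem_succ_le_sum j n) (sum_le_card_mul _) => a.
by apply: leq_prod => l _; apply: q_stem_le.
Qed.

Lemma p_n_succ_le n : p_n k Am n.+1 <= #|A| * \prod_(l <- enum gen) p_stem Am l n.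
Proof.
apply: leq_trans (p_n_succ_le_sum n) (sum_le_card_mul _) => c.
by apply: leq_prod => l _; apply: q_stem_le.
Qed.

Lemma exists_same_sign (m : gen) : 1 < k -> exists2 l : gen, l != m & (l < k) = (m < k).
Proof.
move=> k_gt1; pose b := if m < k then 0 else k.
have b0 : b < 2 * k by rewrite /b; case: ifP; lia.
have b1 : b.+1 < 2 * k by rewrite /b; case: ifP; lia.
have [e|ne] := eqVneq (Ordinal b0) m; [exists (Ordinal b1) | exists (Ordinal b0)] => //.
- by rewrite -e; apply/eqP => /(congr1 val) /=; lia.
- by rewrite /= /b; case: ifP => /=; lia.
- by rewrite /= /b; case: ifP => /=; lia.
Qed.

Lemma p_stem_succ_sq_le (j : gen) n : 1 < k ->
  (p_stem Am j n.+1 * p_stem Am (ginv j) n) ^ 2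
    <= #|A| ^ 2 * p_n k Am n.+1 * \prod_(l <- enum gen) p_stem Am l n.
Proof.
move=> k_gt1; set m := ginv j; have [l' l'_ne l'_sign] := exists_same_sign m k_gt1.
pose P (l : gen) := p_stem Am l n.
pose Pi a := \prod_(l <- enum gen | l != m) q_stem l n a.
have [a0 _|A0] := pickP (@predT A); last first.
  have Pj0 : p_stem Am j n.+1 <= #|A| * 0.
    by apply: leq_trans (p_stem_succ_le_sum j n) (sum_le_card_mul _) => a; have := A0 a.
  by move: Pj0; rewrite muln0 leqn0 => /eqP ->.
have [c0 _ c0_max] := @arg_maxnP A a0 predT Pi isT.
have split_l' (F : gen -> nat) : \prod_(l <- enum gen | l != m) F l
    = F l' * \prod_(l <- [seq l <- enum gen | l != m] | l != l') F l.
  rewrite -big_filter (bigD1_seq l') //; last by rewrite filter_uniq ?enum_uniq.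
  by rewrite mem_filter l'_ne mem_enum.
(* [c0] bounds the stem at [j]; the stems counted by [Pi c0] and one at [l'], standing in for
   [ginv j] (same sign), are the subtrees of a ball pattern *)
have Pj_le : p_stem Am j n.+1 <= #|A| * Pi c0.
  by apply: leq_trans (p_stem_succ_le_sum j n) (sum_le_card_mul _) => a; apply: c0_max.
have Pi_le : q_stem l' n c0 * Pi c0 <= p_n k Am n.+1.
  apply: leq_trans (prod_q_stem_le n c0 (ltnW k_gt1)).
  rewrite (bigD1_seq m) ?mem_enum ?enum_uniq // leq_mul2r; apply/orP; right.
  exact: q_stem_sym.
have Pi_sq_le : Pi c0 * Pi c0 * P m <= p_n k Am n.+1 * \prod_(l <- enum gen | l != m) P l.
  set Rq := \prod_(l <- [seq l <- enum gen | l != m] | l != l') q_stem l n c0.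
  set Rp := \prod_(l <- [seq l <- enum gen | l != m] | l != l') P l.
  have Pi_split : Pi c0 = q_stem l' n c0 * Rq by apply: split_l'.
  have -> : Pi c0 * Pi c0 * P m = (q_stem l' n c0 * Pi c0) * (Rq * P m).
    by rewrite {2}Pi_split; nia.
  rewrite split_l' {2}/P (p_stem_sym n l'_sign) -/(P m) -/Rp [P m * Rp]mulnC.
  by apply: leq_mul Pi_le (leq_mul _ (leqnn _)); apply: leq_prod => l _; apply: q_stem_le.
rewrite (bigD1_seq m) ?mem_enum ?enum_uniq //= -/(P m) expnMn.
apply: leq_trans (_ : (#|A| * Pi c0) ^ 2 * P m ^ 2 <= _).
  by rewrite leq_mul2r leq_exp2r ?Pj_le ?orbT.
have -> : (#|A| * Pi c0) ^ 2 * P m ^ 2 = #|A| ^ 2 * (Pi c0 * Pi c0 * P m) * P m.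
  by rewrite expnMn; nia.
apply: leq_trans (leq_mul (leq_mul (leqnn _) Pi_sq_le) (leqnn _)) (eq_leq _).
by rewrite -!mulnA [p_stem Am m n * _]mulnC.
Qed.
End StemRecursions.
End Combinatorics.

Section Asymptotics.
Local Open Scope R_scope.

Lemma is_lim_seq_div_pow (lam c : R) : 1 < lam -> is_lim_seq (fun n => c / lam ^ n) 0.
Proof.
move=> lam_gt1.
have inv_lt1 : Rabs (/ lam) < 1.
  rewrite Rabs_pos_eq; last by apply/Rlt_le/Rinv_0_lt_compat; lra.
  by rewrite -Rinv_1; apply: Rinv_lt_contravar; lra.
have := is_lim_seq_scal_l _ c _ (is_lim_seq_geom _ inv_lt1).
by rewrite /= Rmult_0_r; apply: is_lim_seq_ext => n; rewrite pow_inv.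
Qed.

Lemma contraction_eventually_le (q : R) (z e : nat -> R) :
  0 <= q < 1 -> (forall n, z (S n) <= q * z n + e n) -> is_lim_seq e 0 ->
  forall eps, 0 < eps -> eventually (fun n => z n <= eps).
Proof.
move=> [q_ge0 q_lt1] z_rec e_lim eps eps_gt0.
have delta_gt0 : 0 < eps * (1 - q) / 2 by apply: Rmult_lt_0_compat; [nra | lra].
have [N1 e_small] := proj2 (is_lim_seq_spec e 0) e_lim (mkposreal _ delta_gt0).
pose m n := Rmax (z (N1 + n)%nat - eps / 2) 0.
(* once [e] is below [eps (1 - q) / 2], the excess of [z] over [eps / 2] decays like [q ^ n] *)
have m_rec n : m (S n) <= q * m n.
  rewrite /m addnS.
  have := e_small (N1 + n)%nat ltac:(lia); rewrite /= Rminus_0_r => /Rabs_lt_between [_ e_lt].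
  have z_le := z_rec (N1 + n)%nat.
  have m_ge := Rmax_l (z (N1 + n)%nat - eps / 2) 0.
  apply: Rmax_lub; last exact: Rmult_le_pos (Rmax_r _ _).
  have : q * (z (N1 + n)%nat - eps / 2) <= q * Rmax (z (N1 + n)%nat - eps / 2) 0.
    exact: Rmult_le_compat_l.
  nra.
have m_geom n : m n <= m O * q ^ n.
  elim: n => [|n IHn] /=; first lra.
  apply: Rle_trans (m_rec n) _.
  have : q * m n <= q * (m O * q ^ n) by apply: Rmult_le_compat_l.
  lra.
have q_abs : Rabs q < 1 by rewrite Rabs_pos_eq; lra.
have := is_lim_seq_scal_l _ (m O) _ (is_lim_seq_geom _ q_abs); rewrite /= Rmult_0_r.
move=> /(is_lim_seq_spec _ 0) /(_ (mkposreal (eps / 2) ltac:(lra))) [N2 geom_small].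
exists (N1 + N2)%nat => n n_ge.
have := geom_small (n - N1)%nat ltac:(lia); rewrite /= Rminus_0_r => /Rabs_lt_between [_].
have := m_geom (n - N1)%nat; have := Rmax_l (z (N1 + (n - N1))%nat - eps / 2) 0.
rewrite /m; have -> : (N1 + (n - N1))%nat = n by lia.
lra.
Qed.

Lemma is_lim_seq_of_sum (x y : nat -> R) (a b : R) :
  (forall eps, 0 < eps -> eventually (fun n => x n - a <= eps)) ->
  (forall eps, 0 < eps -> eventually (fun n => y n - b <= eps)) ->
  is_lim_seq (fun n => x n + y n) (a + b) -> is_lim_seq x a.
Proof.
move=> x_le y_le /is_lim_seq_spec xy_lim; apply/is_lim_seq_spec => eps.
have eps2 : 0 < eps / 2 by have := cond_pos eps; lra.
have [N1 x_small] := x_le _ eps2.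
have [N2 y_small] := y_le _ eps2.
have [N3 xy_close] := xy_lim (mkposreal _ eps2).
exists (N1 + N2 + N3)%nat => n n_ge.
have := xy_close n ltac:(lia); rewrite /= => /Rabs_lt_between [xy_lo _].
have := x_small n ltac:(lia); have := y_small n ltac:(lia).
by move=> y_hi x_hi; apply/Rabs_lt_between; split; lra.
Qed.

Lemma is_lim_seq_geometric_size (lam : R) (s : nat -> R) : 1 < lam ->
  (forall n, (lam - 1) * s n + 1 = lam ^ S n) ->
  is_lim_seq (fun n => s n / lam ^ n) (lam / (lam - 1)).
Proof.
move=> lam1 s_geom.
have := is_lim_seq_minus' _ _ _ _ (is_lim_seq_const (lam / (lam - 1)))
  (@is_lim_seq_div_pow lam (/ (lam - 1)) lam1).
rewrite Rminus_0_r; apply: is_lim_seq_ext => n; have := pow_lt lam n ltac:(lra).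
have -> : s n = (lam * lam ^ n - 1) / (lam - 1) by move: (s_geom n) => /= <-; field; lra.
by move=> ?; field; lra.
Qed.

Lemma is_lim_seq_geometric_ball (lam c : R) (d : nat -> R) : 1 < lam ->
  (forall n, (lam - 1) * d n + c = (lam - 1) + c * lam ^ n) ->
  is_lim_seq (fun n => d n / lam ^ n) (c / (lam - 1)).
Proof.
move=> lam1 d_geom.
have := is_lim_seq_plus' _ _ _ _ (is_lim_seq_const (c / (lam - 1)))
  (@is_lim_seq_div_pow lam ((lam - 1 - c) / (lam - 1)) lam1).
rewrite Rplus_0_r; apply: is_lim_seq_ext => n; have := pow_lt lam n ltac:(lra).
have -> : d n = (lam - 1 + c * lam ^ n - c) / (lam - 1) by rewrite -(d_geom n); field; lra.
by move=> ?; field; lra.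
Qed.

Lemma is_lim_seq_div_rates (lam a b : R) (u v : nat -> R) :
  lam <> 0 -> b <> 0 -> (forall n, v n <> 0) ->
  is_lim_seq (fun n => u n / lam ^ n) a -> is_lim_seq (fun n => v n / lam ^ n) b ->
  is_lim_seq (fun n => u n / v n) (a / b).
Proof.
move=> lam_ne0 b_ne0 v_ne0 u_lim v_lim.
move: (is_lim_seq_div' _ _ _ _ u_lim v_lim b_ne0); apply: is_lim_seq_ext => n.
by have := v_ne0 n; have := pow_nonzero lam n lam_ne0 => ? ?; field.
Qed.

Section LinearRecursions.
Variables (K C : R) (al be pi : nat -> R).
Hypothesis K_gt1 : 1 < K.
Hypothesis C_ge0 : 0 <= C.
Hypothesis al_ge0 : forall n, 0 <= al n.
Hypothesis be_ge0 : forall n, 0 <= be n.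
Hypothesis al_rec : forall n, al (S n) + be n <= C + K * (al n + be n).
Hypothesis be_rec : forall n, be (S n) + al n <= C + K * (al n + be n).
Hypothesis pi_rec_le : forall n, pi (S n) <= C + K * (al n + be n).
Hypothesis pi_rec_ge : forall n, 2 * (al (S n) + be n) <= 2 * C + pi (S n) + K * (al n + be n).

Let lam := 2 * K - 1.

Lemma lam_gt1 : 1 < lam. Proof. rewrite /lam; lra. Qed.
Lemma lam_pow_gt0 n : 0 < lam ^ n. Proof. apply: pow_lt; have := lam_gt1; lra. Qed.

Lemma is_lim_seq_sum_rate : exists tau : R, is_lim_seq (fun n => (al n + be n) / lam ^ n) tau.
Proof.
have lam1 := lam_gt1.
pose D := 2 * C / (lam - 1).
have D_ge0 : 0 <= D by apply: Rle_mult_inv_pos; lra.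
(* adding the fixed point [D] of [T |-> lam T + 2 C] makes the normalised sum nonincreasing *)
pose t n := (al n + be n + D) / lam ^ n.
have t_decr n : t (S n) <= t n.
  have := lam_pow_gt0 n; have := al_rec n; have := be_rec n; rewrite /t /= => ? ? ?.
  apply: (Rmult_le_reg_r (lam * lam ^ n)); first nra.
  have -> : (al n + be n + D) / lam ^ n * (lam * lam ^ n) = lam * (al n + be n + D) by field; lra.
  have -> : (al (S n) + be (S n) + D) / (lam * lam ^ n) * (lam * lam ^ n)
    = al (S n) + be (S n) + D by field; lra.
  have : lam * D = D + 2 * C by rewrite /D; field; lra.
  by rewrite /lam; nra.
have t_ge0 n : 0 <= t n.
  by apply: Rle_mult_inv_pos; [have := al_ge0 n; have := be_ge0 n; lra | exact: lam_pow_gt0].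
have [tau t_lim] := ex_finite_lim_seq_decr t 0 t_decr t_ge0.
exists tau; have := is_lim_seq_minus' _ _ _ _ t_lim (@is_lim_seq_div_pow lam D lam1).
rewrite Rminus_0_r; apply: is_lim_seq_ext => n.
by have := lam_pow_gt0 n; rewrite /t => ?; field; lra.
Qed.

Lemma half_rate_upper (u v : nat -> R) (tau : R) :
  (forall n, u (S n) + v n <= C + K * (u n + v n)) ->
  is_lim_seq (fun n => (u n + v n) / lam ^ n) tau ->
  forall eps, 0 < eps -> eventually (fun n => u n / lam ^ n - tau / 2 <= eps).
Proof.
move=> u_rec uv_lim; have lam1 := lam_gt1.
(* [tau / 2] is the fixed point of [x |-> x / lam + (K - 1) tau / lam] since [lam = 2 K - 1] *)
pose e n := (K - 1) / lam * ((u n + v n) / lam ^ n - tau) + C / lam ^ (S n).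
apply: (@contraction_eventually_le (/ lam) _ e).
- split; first by apply/Rlt_le/Rinv_0_lt_compat; lra.
  by rewrite -Rinv_1; apply: Rinv_lt_contravar; lra.
- move=> n; have := u_rec n; have := lam_pow_gt0 n; rewrite /e /= => lamn_gt0 u_le.
  apply: (Rmult_le_reg_r (lam * lam ^ n)); first nra.
  rewrite Rmult_minus_distr_r; set rhs := (_ + _) * _.
  have -> : rhs = u n + (K - 1) * (u n + v n) + C - lam ^ n * (tau / 2 + (K - 1) * tau)
    by rewrite /rhs; field; lra.
  have -> : u (S n) / (lam * lam ^ n) * (lam * lam ^ n) = u (S n) by field; lra.
  by rewrite /lam; nra.
- have := is_lim_seq_plus' _ _ _ _
    (is_lim_seq_scal_l _ ((K - 1) / lam) _
      (is_lim_seq_minus' _ _ _ _ uv_lim (is_lim_seq_const tau)))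
    (proj1 (is_lim_seq_incr_1 _ 0) (@is_lim_seq_div_pow lam C lam1)).
  by rewrite Rminus_diag /= Rmult_0_r Rplus_0_r.
Qed.

Lemma is_lim_seq_half_rates (tau : R) :
  is_lim_seq (fun n => (al n + be n) / lam ^ n) tau ->
  is_lim_seq (fun n => al n / lam ^ n) (tau / 2) /\ is_lim_seq (fun n => be n / lam ^ n) (tau / 2).
Proof.
move=> sum_lim.
have sum_lim' : is_lim_seq (fun n => (be n + al n) / lam ^ n) tau.
  by apply: is_lim_seq_ext sum_lim => n; rewrite Rplus_comm.
have al_up := half_rate_upper al_rec sum_lim.
have be_up : forall eps, 0 < eps -> eventually (fun n => be n / lam ^ n - tau / 2 <= eps).
  by apply: half_rate_upper sum_lim' => n; rewrite [be n + _]Rplus_comm; apply: be_rec.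
have split_lim (x y : nat -> R) : is_lim_seq (fun n => (x n + y n) / lam ^ n) tau ->
    is_lim_seq (fun n => x n / lam ^ n + y n / lam ^ n) (tau / 2 + tau / 2).
  move=> xy_lim; have -> : tau / 2 + tau / 2 = tau by field.
  by apply: is_lim_seq_ext xy_lim => n; rewrite /Rdiv Rmult_plus_distr_r.
split; [exact: is_lim_seq_of_sum al_up be_up (split_lim _ _ sum_lim)
       | exact: is_lim_seq_of_sum be_up al_up (split_lim _ _ sum_lim')].
Qed.

Lemma is_lim_seq_pi_rate (tau : R) :
  is_lim_seq (fun n => (al n + be n) / lam ^ n) tau ->
  is_lim_seq (fun n => pi n / lam ^ n) (K * tau / lam).
Proof.
move=> sum_lim; have lam1 := lam_gt1.
have [al_lim be_lim] := is_lim_seq_half_rates sum_lim.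
have al_lim1 := proj1 (is_lim_seq_incr_1 _ _) al_lim.
have C_lim c := proj1 (is_lim_seq_incr_1 _ 0) (@is_lim_seq_div_pow lam c lam1).
pose hi n := C / lam ^ S n + K / lam * ((al n + be n) / lam ^ n).
pose lo n := 2 * (al (S n) / lam ^ S n) + 2 / lam * (be n / lam ^ n)
  - K / lam * ((al n + be n) / lam ^ n) - 2 * C / lam ^ S n.
have hi_lim : is_lim_seq hi (K * tau / lam).
  have := is_lim_seq_plus' _ _ _ _ (C_lim C) (is_lim_seq_scal_l _ (K / lam) _ sum_lim).
  by rewrite Rplus_0_l /Rdiv Rmult_assoc (Rmult_comm (/ lam)) -Rmult_assoc.
have lo_lim : is_lim_seq lo (K * tau / lam).
  have := is_lim_seq_minus' _ _ _ _ (is_lim_seq_minus' _ _ _ _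
    (is_lim_seq_plus' _ _ _ _ (is_lim_seq_scal_l _ 2 _ al_lim1)
      (is_lim_seq_scal_l _ (2 / lam) _ be_lim))
    (is_lim_seq_scal_l _ (K / lam) _ sum_lim)) (C_lim (2 * C)).
  have -> : 2 * (tau / 2) + 2 / lam * (tau / 2) - K / lam * tau - 0 = K * tau / lam.
    by rewrite /lam; field; lra.
  by [].
apply/is_lim_seq_incr_1; apply: (is_lim_seq_le_le lo _ hi) => // n.
have := lam_pow_gt0 n; have := pi_rec_le n; have := pi_rec_ge n => pi_ge pi_le lamn.
have lam_n1 : 0 < lam * lam ^ n by nra.
rewrite /lo /hi /=; split; apply: (Rmult_le_reg_r (lam * lam ^ n)) => //.
- set lhs := (_ - _) * _.
  have -> : lhs = 2 * (al (S n) + be n) - K * (al n + be n) - 2 * C by rewrite /lhs; field; lra.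
  have -> : pi (S n) / (lam * lam ^ n) * (lam * lam ^ n) = pi (S n) by field; lra.
  lra.
- have -> : pi (S n) / (lam * lam ^ n) * (lam * lam ^ n) = pi (S n) by field; lra.
  set rhs := (_ + _) * _.
  have -> : rhs = C + K * (al n + be n) by rewrite /rhs; field; lra.
  lra.
Qed.

Lemma is_lim_seq_common_rate (s d : nat -> R) :
  (forall n, (lam - 1) * s n + 1 = lam ^ S n) ->
  (forall n, (lam - 1) * d n + 2 * K = (lam - 1) + 2 * K * lam ^ n) ->
  exists L : R, [/\ is_lim_seq (fun n => al n / s n) L, is_lim_seq (fun n => be n / s n) L
    & is_lim_seq (fun n => pi n / d n) L].
Proof.
move=> s_geom d_geom; have lam1 := lam_gt1.
have [tau sum_lim] := is_lim_seq_sum_rate.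
have [al_lim be_lim] := is_lim_seq_half_rates sum_lim.
have s_ne0 n : s n <> 0.
  by have := s_geom n; have := Rlt_pow_R1 lam (S n) lam1 (Nat.lt_0_succ n); nra.
have d_ne0 n : d n <> 0.
  by have := d_geom n; have := pow_R1_Rle lam n ltac:(lra); nra.
have lam_ne0 : lam <> 0 by lra.
have s_rate_ne0 : lam / (lam - 1) <> 0 by apply/Rgt_not_eq/Rdiv_lt_0_compat; lra.
have d_rate_ne0 : 2 * K / (lam - 1) <> 0 by apply/Rgt_not_eq/Rdiv_lt_0_compat; lra.
have s_lim := is_lim_seq_geometric_size lam1 s_geom.
have d_lim := is_lim_seq_geometric_ball lam1 d_geom.
exists (tau / 2 / (lam / (lam - 1))); split.
- exact: is_lim_seq_div_rates lam_ne0 s_rate_ne0 s_ne0 al_lim s_lim.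
- exact: is_lim_seq_div_rates lam_ne0 s_rate_ne0 s_ne0 be_lim s_lim.
have -> : tau / 2 / (lam / (lam - 1)) = K * tau / lam / (2 * K / (lam - 1)).
  by rewrite /lam; field; lra.
exact: is_lim_seq_div_rates lam_ne0 d_rate_ne0 d_ne0 (is_lim_seq_pi_rate sum_lim) d_lim.
Qed.

End LinearRecursions.
End Asymptotics.

Section LogCounts.
Local Open Scope R_scope.

Lemma INR2 : INR 2 = 2.
Proof. by rewrite /=; lra. Qed.

Lemma ln_0 : ln 0 = 0.
Proof. by rewrite /ln; case: Rlt_dec => // /Rlt_irrefl []. Qed.

Lemma is_lim_seq_ln_count_eq0 (u : nat -> nat) (v : nat -> R) :
  (forall n, u n = 0%N) -> is_lim_seq (fun n => ln (INR (u n)) / v n) 0.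
Proof.
move=> u0; apply: is_lim_seq_ext (is_lim_seq_const 0) => n.
by rewrite u0 /= ln_0 /Rdiv Rmult_0_l.
Qed.

Lemma INR_gt0 n : (0 < n)%N -> 0 < INR n.
Proof. by move=> n_gt0; apply: lt_0_INR; apply/ltP. Qed.

Lemma ln_INR_ge0 n : 0 <= ln (INR n).
Proof.
case: n => [|n]; first by rewrite ln_0; lra.
by rewrite -ln_1; apply: ln_le; [lra | apply: (le_INR 1); apply/leP].
Qed.

Lemma ln_INR_mul a b : (0 < a)%N -> (0 < b)%N -> ln (INR (a * b)) = ln (INR a) + ln (INR b).
Proof. by move=> a_gt0 b_gt0; rewrite mult_INR ln_mult //; apply: INR_gt0. Qed.

Lemma INR_expn a n : INR (a ^ n) = INR a ^ n.
Proof. by elim: n => [|n IHn] //; rewrite expnS mult_INR IHn. Qed.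

Lemma ln_INR_exp a n : (0 < a)%N -> ln (INR (a ^ n)) = INR n * ln (INR a).
Proof. by move=> a_gt0; rewrite INR_expn ln_pow //; apply: INR_gt0. Qed.

Lemma ln_INR_le a b : (0 < a)%N -> (a <= b)%N -> ln (INR a) <= ln (INR b).
Proof. by move=> a_gt0 ab; apply: ln_le; [apply: INR_gt0 | apply/le_INR/leP]. Qed.

End LogCounts.

Section EntropyLimit.
Local Open Scope R_scope.
Variables (k : nat) (A : finType) (Am : rel A).
Hypothesis k_gt1 : (1 < k)%N.
Hypothesis X_ne : exists t : word k -> A, inX Am t.

Let k_gt0 : (0 < k)%N := ltnW k_gt1.
Let gen0 : 'I_(2 * k) := Ordinal (leq_trans k_gt0 (leq_pmull k (isT : 0 < 2)%N)).

Let al n := ln (INR (p_stem Am gen0 n)).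
Let be n := ln (INR (p_stem Am (ginv gen0) n)).
Let pi n := ln (INR (p_n k Am n)).
Let K := INR k.
Let C := ln (INR #|A|).

Lemma p_stem_gt0 (l : 'I_(2 * k)) n : (0 < p_stem Am l n)%N.
Proof. by have [t Xt] := X_ne; rewrite p_stemE; apply: npat_in_gt0 Xt. Qed.

Lemma p_n_gt0 n : (0 < p_n k Am n)%N.
Proof. by have [t Xt] := X_ne; rewrite p_nE; apply: npat_in_gt0 Xt. Qed.

Lemma card_A_gt0 : (0 < #|A|)%N.
Proof. by have [t _] := X_ne; apply/card_gt0P; exists (t [::]). Qed.

Lemma p_stem_sign (l : 'I_(2 * k)) n :
  p_stem Am l n = if (l < k)%N then p_stem Am gen0 n else p_stem Am (ginv gen0) n.
Proof. by case: ifP => l_lt; apply: p_stem_sym; rewrite ?ginv_lt l_lt /= k_gt0. Qed.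

Lemma ln_prod_p_stem n : ln (INR (\prod_(l <- enum 'I_(2 * k)) p_stem Am l n)) = K * (al n + be n).
Proof.
rewrite (eq_bigr _ (fun l _ => p_stem_sign l n)) prod_gen_sign.
by rewrite ln_INR_mul ?expn_gt0 ?p_stem_gt0 // !ln_INR_exp ?p_stem_gt0 // Rmult_plus_distr_l.
Qed.

Lemma prod_p_stem_gt0 n : (0 < \prod_(l <- enum 'I_(2 * k)) p_stem Am l n)%N.
Proof. by apply: prodn_gt0 => l; apply: p_stem_gt0. Qed.

Lemma ln_stem_pair_le (j : 'I_(2 * k)) n :
  ln (INR (p_stem Am j n.+1)) + ln (INR (p_stem Am (ginv j) n)) <= C + K * (al n + be n).
Proof.
have := ln_INR_le _ (p_stem_succ_le Am j n); rewrite muln_gt0 !p_stem_gt0 => /(_ isT).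
by rewrite !ln_INR_mul ?p_stem_gt0 ?card_A_gt0 ?prod_p_stem_gt0 // ln_prod_p_stem.
Qed.

Lemma al_rec n : al (S n) + be n <= C + K * (al n + be n).
Proof. exact: ln_stem_pair_le. Qed.

Lemma be_rec n : be (S n) + al n <= C + K * (al n + be n).
Proof. by have := ln_stem_pair_le (ginv gen0) n; rewrite ginvK. Qed.

Lemma pi_rec_le n : pi (S n) <= C + K * (al n + be n).
Proof.
have := ln_INR_le (p_n_gt0 _) (p_n_succ_le k Am n).
by rewrite !ln_INR_mul ?card_A_gt0 ?prod_p_stem_gt0 // ln_prod_p_stem.
Qed.

Lemma pi_rec_ge n : 2 * (al (S n) + be n) <= 2 * C + pi (S n) + K * (al n + be n).
Proof.
have pair_gt0 : (0 < p_stem Am gen0 n.+1 * p_stem Am (ginv gen0) n)%N.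
  by rewrite muln_gt0 !p_stem_gt0.
have lhsE : ln (INR ((p_stem Am gen0 n.+1 * p_stem Am (ginv gen0) n) ^ 2))
    = 2 * (al (S n) + be n).
  by rewrite ln_INR_exp // ln_INR_mul ?p_stem_gt0 // INR2.
have rhsE : ln (INR (#|A| ^ 2 * p_n k Am n.+1 * \prod_(l <- enum 'I_(2 * k)) p_stem Am l n))
    = 2 * C + pi (S n) + K * (al n + be n).
  rewrite ln_INR_mul ?prod_p_stem_gt0 ?muln_gt0 ?expn_gt0 ?card_A_gt0 ?p_n_gt0 //.
  rewrite ln_INR_mul ?expn_gt0 ?card_A_gt0 ?p_n_gt0 // ln_INR_exp ?card_A_gt0 //.
  by rewrite ln_prod_p_stem INR2.
rewrite -lhsE -rhsE; apply: ln_INR_le (p_stem_succ_sq_le Am gen0 n k_gt1).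
by rewrite expn_gt0 pair_gt0.
Qed.

Lemma INR_2k_sub (m : nat) : (m <= 2)%N -> INR (2 * k - m) = 2 * K - INR m.
Proof.
move=> m_le2; have e : (2 * k - m + m = 2 * k)%N by have := k_gt0; lia.
by have := congr1 INR e; rewrite plus_INR mult_INR INR2 /K; lra.
Qed.

Lemma is_lim_seq_entropy_rates (i : 'I_(2 * k)) : exists L : R,
  is_lim_seq (fun n => ln (INR (p_stem Am i n)) / INR (size (stemset i n))) L /\
  is_lim_seq (fun n => pi n / INR (size (delta k n))) L.
Proof.
have K_gt1 : 1 < K by apply: (lt_INR 1); apply/ltP.
have s_geom n : (2 * K - 1 - 1) * INR (size (stemset i n)) + 1 = (2 * K - 1) ^ S n.
  have := congr1 INR (size_stemset i n).
  by rewrite plus_INR mult_INR INR_expn !INR_2k_sub // INR2 INR_1 => e; lra.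
have d_geom n : (2 * K - 1 - 1) * INR (size (delta k n)) + 2 * K
    = 2 * K - 1 - 1 + 2 * K * (2 * K - 1) ^ n.
  have := congr1 INR (size_delta n k_gt0).
  by rewrite !plus_INR !mult_INR INR_expn !INR_2k_sub // INR2 INR_1 INR_0 /K; nra.
have [L [al_lim be_lim pi_lim]] := is_lim_seq_common_rate K_gt1 (ln_INR_ge0 _)
  (fun n => ln_INR_ge0 _) (fun n => ln_INR_ge0 _) al_rec be_rec pi_rec_le pi_rec_ge s_geom d_geom.
exists L; split; last exact: pi_lim.
by case: (boolP (i < k)%N) => i_lt; [move: al_lim | move: be_lim] => lim;
  apply: (is_lim_seq_ext _ _ _ _ lim) => n; rewrite (p_stem_sign i n) ?(negbTE i_lt) ?i_lt.
Qed.

End EntropyLimit.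

Theorem proposition4p5 (k : nat) (hk : (2 <= k)%nat) (A : finType) (Am : rel A)
    (i : 'I_(2 * k)) :
  is_lim_seq
    (fun n => (ln (INR (p_n k Am n)) / INR (size (delta k n)))%R)
    (LimSup_seq
       (fun n => (ln (INR (p_stem Am i n)) / INR (size (stemset i n)))%R)).
Proof.
have [L [stem_lim ball_lim]] : exists L : R,
    is_lim_seq (fun n => ln (INR (p_stem Am i n)) / INR (size (stemset i n)))%R L /\
    is_lim_seq (fun n => ln (INR (p_n k Am n)) / INR (size (delta k n)))%R L.
  case: (excluded_middle_informative (exists t : word k -> A, inX Am t)) => [X_ne|X_empty].
    exact: is_lim_seq_entropy_rates hk X_ne i.
  have X0 (t : word k -> A) : ~ inX Am t by move=> Xt; apply: X_empty; exists t.
  by exists R0; split; apply: is_lim_seq_ln_count_eq0 => n; rewrite ?p_stem_eq0 ?p_n_eq0.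
by rewrite (is_LimSup_seq_unique _ _ (is_lim_LimSup_seq _ _ stem_lim)).
Qed.
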